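(* Let an operational theory contain binary-outcome measurements $\mathcal{M}_1,\mathcal{M}_2,\mathcal{M}_3$ (outcomes $X_i\in\{0,1\}$) that are pairwise jointly measurable via joint measurements $\mathcal{M}_{12},\mathcal{M}_{13},\mathcal{M}_{23}$, and a preparation $\mathcal{P}_*$ with $p(X_i=0,X_j=1|\mathcal{M}_{ij};\mathcal{P}_* )=p(X_i=1,X_j=0|\mathcal{M}_{ij};\mathcal{P}_* )=\tfrac12$ for all $i\neq j$. Then there is no ontological model reproducing these statistics that is measurement-noncontextual and outcome-deterministic (for $\mathcal{M}_1,\mathcal{M}_2,\mathcal{M}_3,\mathcal{M}_{12},\mathcal{M}_{13},\mathcal{M}_{23}$).
   Context: An operational theory assigns outcome probabilities $p(X|M;P)$ to preparation procedures $P$ and measurement procedures $M$; measurements $\mathcal{M}$ (preparations $\mathcal{P}$) are equivalence classes of procedures with identical statistics. A joint measurement $\mathcal{M}_{ij}$ of $\mathcal{M}_i,\mathcal{M}_j$ has outcome $(X_i,X_j)$ whose marginals reproduce the statistics of $\mathcal{M}_i$ and $\mathcal{M}_j$ for every preparation. An ontological model specifies ontic states $\lambda\in\Lambda$, distributions $p(\lambda|P)$ and response functions $p(X|M;\lambda)$ with $p(X|M;P)=\sum_\lambda p(X|M;\lambda)p(\lambda|P)$. It is measurement-noncontextual if the response function of a procedure depends only on its equivalence class, and outcome-deterministic for a measurement if its response function takes values in $\{0,1\}$. *)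

From HB Require Import structures.
From mathcomp Require Import all_boot all_order all_algebra.
From mathcomp Require Import classical_sets reals constructive_ereal ereal esum.

Set Implicit Arguments.
Unset Strict Implicit.
Unset Printing Implicit Defensive.

Import Order.TTheory GRing.Theory Num.Theory.
Local Open Scope ring_scope.
Local Open Scope classical_set_scope.

Record optheory (R : realType) := OpTheory {
  Prep : Type;
  MProc : finType -> Type;
  prob : forall X : finType, MProc X -> Prep -> X -> R;
  post : forall X Y : finType, (X -> Y) -> MProc X -> MProc Y;
  prob_ge0 : forall (X : finType) M P x, 0 <= @prob X M P x;
  prob_sum1 : forall (X : finType) M P, \sum_(x : X) @prob X M P x = 1;
  prob_post : forall (X Y : finType) (f : X -> Y) M P y,
      @prob Y (post f M) P y = \sum_(x : X | f x == y) @prob X M P x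
}.

Arguments prob {R o X}.
Arguments post {R o X Y}.

(* Operational equivalence of two measurement procedures (same statistics
   for every preparation procedure): measurements are the classes. *)
Definition op_equiv R (T : optheory R) (X : finType) (M M' : MProc T X) :=
  forall (P : Prep T) (x : X), prob M P x = prob M' P x.

Definition joint_meas R (T : optheory R) (Mi Mj : MProc T bool)
  (Mij : MProc T (bool * bool)%type) :=
  op_equiv (post (fun o : bool * bool => o.1) Mij) Mi /\
  op_equiv (post (fun o : bool * bool => o.2) Mij) Mj.

Record ontmodel R (T : optheory R) := OntModel {
  Lam : choiceType;
  mu : Prep T -> Lam -> R;
  resp : forall X : finType, MProc T X -> Lam -> X -> R;
  mu_ge0 : forall P l, 0 <= mu P l;
  mu_sum1 : forall P, (\esum_(l in [set: Lam]) (mu P l)%:E = 1)%E;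
  resp_ge0 : forall (X : finType) M l x, 0 <= @resp X M l x;
  resp_sum1 : forall (X : finType) M l, \sum_(x : X) @resp X M l x = 1;
  resp_post : forall (X Y : finType) (f : X -> Y) M l y,
      @resp Y (post f M) l y = \sum_(x : X | f x == y) @resp X M l x;
  reproduce : forall (X : finType) M P x,
      ((prob M P x)%:E = \esum_(l in [set: Lam]) (@resp X M l x * mu P l)%:E)%E
}.

Arguments resp {R T} o {X}.

Definition meas_noncontextual R (T : optheory R) (O : ontmodel T) :=
  forall (X : finType) (M M' : MProc T X), op_equiv M M' -> resp O M = resp O M'.

Definition outcome_det R (T : optheory R) (O : ontmodel T) (X : finType)
  (M : MProc T X) :=
  forall l x, resp O M l x = 0 \/ resp O M l x = 1.

From HB Require Import structures.
From mathcomp Require Import all_boot all_order all_algebra.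
From mathcomp Require Import classical_sets reals constructive_ereal ereal esum.
From mathcomp Require Import lra.

(* In an outcome-deterministic, measurement-noncontextual model every ontic
   state assigns definite values x1, x2, x3 in {0, 1} to M1, M2, M3, and
   noncontextuality forces the joint measurements to respond through these
   values: the probability that Mij gives anticorrelated outcomes is at most
   |xi - xj|.  Three bits cannot be pairwise different, so the three
   anticorrelation probabilities sum to at most 2 in every ontic state, hence
   on average; but under P* they sum to 3. *)

Import Order.TTheory GRing.Theory Num.Theory.
Local Open Scope ring_scope.

Lemma sum_pair_fst (V : nmodType) (I J : finType) (F : I * J -> V) (i : I) :
  \sum_(x | x.1 == i) F x = \sum_(j : J) F (i, j).
Proof.
transitivity (\sum_(i' | i' == i) \sum_(j : J) F (i', j)); last first.
  by rewrite big_pred1_eq.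
by rewrite pair_big_dep; apply: eq_big => -[i' j] /=; rewrite ?andbT.
Qed.

Lemma sum_pair_snd (V : nmodType) (I J : finType) (F : I * J -> V) (j : J) :
  \sum_(x | x.2 == j) F x = \sum_(i : I) F (i, j).
Proof.
transitivity (\sum_(j' | j' == j) \sum_(i : I) F (i, j')); last first.
  by rewrite big_pred1_eq.
rewrite pair_big_dep /= (reindex (fun x : I * J => (x.2, x.1))) /=.
  by apply: eq_big => -[i j'] /=; rewrite ?andbT.
by exists (fun x : J * I => (x.2, x.1)) => -[].
Qed.

Lemma dist3_le2 {R : realDomainType} {x1 x2 x3 : R} :
  0 <= x1 <= 1 -> 0 <= x2 <= 1 -> 0 <= x3 <= 1 ->
  `|x1 - x2| + `|x1 - x3| + `|x2 - x3| <= 2.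
Proof.
have normE (x y : R) : `|x - y| = x - y \/ `|x - y| = y - x.
  case: (lerP 0 (x - y)) => h; first by left; rewrite ger0_norm.
  by right; rewrite ltr0_norm // opprB.
move=> /andP[? ?] /andP[? ?] /andP[? ?].
have := normr_ge0 (x1 - x2); have := normr_ge0 (x1 - x3).
have := normr_ge0 (x2 - x3).
by case: (normE x1 x2) => ->; case: (normE x1 x3) => ->;
  case: (normE x2 x3) => ->; lra.
Qed.

Section OntologicalModel.
Context {R : realType} {T : optheory R} (O : ontmodel T).

Lemma resp_post_fst (Mij : MProc T (bool * bool)%type) l b :
  resp O (post (fun o : bool * bool => o.1) Mij) l b
  = \sum_(y : bool) resp O Mij l (b, y).
Proof. by rewrite resp_post sum_pair_fst. Qed.

Lemma resp_post_snd (Mij : MProc T (bool * bool)%type) l b :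
  resp O (post (fun o : bool * bool => o.2) Mij) l b
  = \sum_(x : bool) resp O Mij l (x, b).
Proof. by rewrite resp_post sum_pair_snd. Qed.

Definition anticorr (Mij : MProc T (bool * bool)%type) l :=
  resp O Mij l (false, true) + resp O Mij l (true, false).

Lemma anticorr_ge0 Mij l : 0 <= anticorr Mij l.
Proof. by rewrite addr_ge0 ?resp_ge0. Qed.

Lemma anticorr_le_resp {Mi Mj : MProc T bool} {Mij} l b :
  meas_noncontextual O -> joint_meas Mi Mj Mij ->
  anticorr Mij l <= resp O Mi l b + resp O Mj l b.
Proof.
move=> NC [/NC <- /NC <-]; rewrite resp_post_fst resp_post_snd !big_bool /=.
have := @resp_ge0 _ _ O _ Mij l (b, b).
by rewrite /anticorr; case: b => /=; lra.
Qed.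

Lemma anticorr_le_dist {Mi Mj : MProc T bool} {Mij} l :
  meas_noncontextual O -> outcome_det O Mi -> outcome_det O Mj ->
  joint_meas Mi Mj Mij ->
  anticorr Mij l <= `|resp O Mi l true - resp O Mj l true|.
Proof.
move=> NC deti detj J.
have := anticorr_le_resp l true NC J; have := anticorr_le_resp l false NC J.
have := @resp_sum1 _ _ O _ Mi l; have := @resp_sum1 _ _ O _ Mj l.
rewrite !big_bool /=.
by case: (deti l true) => ->; case: (detj l true) => ->;
  rewrite ?subrr ?sub0r ?subr0 ?normrN ?normr0 ?normr1 => ? ? ? ?; lra.
Qed.

Lemma resp_true_01 (M : MProc T bool) l : 0 <= resp O M l true <= 1.
Proof.
have := @resp_sum1 _ _ O _ M l; rewrite big_bool /=.
have := @resp_ge0 _ _ O _ M l true; have := @resp_ge0 _ _ O _ M l false.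
by move=> *; apply/andP; split; lra.
Qed.

Definition expect P (f : Lam O -> R) :=
  (\esum_(l in [set: Lam O]) (f l * mu P l)%:E)%E.

Lemma expectD P (f g : Lam O -> R) :
  (forall l, 0 <= f l) -> (forall l, 0 <= g l) ->
  expect P (fun l => f l + g l) = (expect P f + expect P g)%E.
Proof.
move=> f0 g0; rewrite /expect -esumD => [|l _|l _]; last 2 first.
- by rewrite lee_fin mulr_ge0 ?mu_ge0.
- by rewrite lee_fin mulr_ge0 ?mu_ge0.
by apply: eq_esum => l _; rewrite mulrDl EFinD.
Qed.

Lemma expect_cst_nat P n : expect P (fun=> n%:R) = n%:R%:E.
Proof.
elim: n => [|n IH].
  by rewrite /expect (eq_esum (b := fun=> 0%E)) ?esum1 // => l _; rewrite mul0r.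
rewrite -addn1 natrD (expectD P (fun=> n%:R) (fun=> 1)) ?ler0n // IH.
by rewrite /expect (eq_esum (b := fun l => (mu P l)%:E)) ?mu_sum1 // => l _;
  rewrite mul1r.
Qed.

Lemma expect_le_nat P (f : Lam O -> R) n :
  (forall l, f l <= n%:R) -> (expect P f <= n%:R%:E)%E.
Proof.
move=> fn; rewrite -(expect_cst_nat P n); apply: le_esum => l _.
by rewrite lee_fin ler_wpM2r ?mu_ge0.
Qed.

Lemma prob_anticorrE Mij P :
  (prob Mij P (false, true) + prob Mij P (true, false))%:E
  = expect P (anticorr Mij).
Proof.
rewrite /anticorr expectD => [|l|l]; try exact: resp_ge0.
by rewrite EFinD !(reproduce O).
Qed.

End OntologicalModel.

Theorem corollary2 (R : realType) (T : optheory R)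
  (M1 M2 M3 : MProc T bool) (M12 M13 M23 : MProc T (bool * bool)%type)
  (Pstar : Prep T) :
  joint_meas M1 M2 M12 -> joint_meas M1 M3 M13 -> joint_meas M2 M3 M23 ->
  prob M12 Pstar (false, true) = 1 / 2 -> prob M12 Pstar (true, false) = 1 / 2 ->
  prob M13 Pstar (false, true) = 1 / 2 -> prob M13 Pstar (true, false) = 1 / 2 ->
  prob M23 Pstar (false, true) = 1 / 2 -> prob M23 Pstar (true, false) = 1 / 2 ->
  ~ exists O : ontmodel T,
      meas_noncontextual O /\
      outcome_det O M1 /\ outcome_det O M2 /\ outcome_det O M3 /\
      outcome_det O M12 /\ outcome_det O M13 /\ outcome_det O M23.
Proof.
move=> J12 J13 J23 p12 q12 p13 q13 p23 q23 [O [NC [det1 [det2 [det3 _]]]]].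
pose A l := anticorr O M12 l + anticorr O M13 l + anticorr O M23 l.
have A_le2 l : A l <= 2%:R.
  apply: le_trans _ (dist3_le2 (resp_true_01 O M1 l) (resp_true_01 O M2 l)
                               (resp_true_01 O M3 l)).
  by rewrite /A; do 2?apply: lerD; apply: anticorr_le_dist.
have expectA : expect O Pstar A = 3%:R%:E.
  have A12_ge0 l : 0 <= anticorr O M12 l + anticorr O M13 l.
    by rewrite addr_ge0 ?anticorr_ge0.
  rewrite (expectD _ _ _ _ A12_ge0 (anticorr_ge0 O M23)).
  rewrite (expectD _ _ _ _ (anticorr_ge0 O M12) (anticorr_ge0 O M13)).
  rewrite -!prob_anticorrE p12 q12 p13 q13 p23 q23 -!EFinD; congr _%:E; lra.
by have := expect_le_nat O Pstar A 2 A_le2; rewrite expectA lee_fin ler_nat.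
Qed.
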